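(* Let $\alpha,\beta,\gamma$ be real constants with $\beta\neq 0$, $\alpha\beta\neq 3$ and $\beta^2\gamma+3\alpha\beta-9=0$. Then for every constant $a_2$, the functions $$q(t)=\pm\frac{\sqrt{9a_2(\alpha\beta-3)^2e^{-\frac{2(\alpha\beta-3)}{\beta}t}-3\beta^2(\alpha\beta-3)e^{-\frac{4(\alpha\beta-3)}{\beta}t}}}{\beta^2e^{-\frac{2(\alpha\beta-3)}{\beta}t}-3a_2(\alpha\beta-3)},\qquad p(t)=(\alpha\beta-3)\frac{q(t)}{\beta}+\frac{\beta}{3}q(t)^3,$$ on any interval where they are defined and real, solve the system $$\dot q=-p,\qquad \dot p=-\gamma q+q^3-(\alpha+\beta q^2)p,$$ so that $q$ solves the force-free Duffing–Van der Pol equation $\ddot q+(\alpha+\beta q^2)\dot q-\gamma q+q^3=0$. These are exactly the solutions on which the first integral $I_2=\big[p-(\alpha\beta-3)\frac{q}{\beta}-\frac{\beta}{3}q^3\big]e^{3t/\beta}$ vanishes (with $q\neq0$). *)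

From Stdlib Require Import Reals.
Open Scope R_scope.

Definition mAB (alpha beta : R) : R := alpha * beta - 3.

Definition radic (alpha beta a2 t : R) : R :=
  9 * a2 * (mAB alpha beta) ^ 2 * exp (- (2 * mAB alpha beta / beta) * t)
  - 3 * beta ^ 2 * mAB alpha beta * exp (- (4 * mAB alpha beta / beta) * t).

Definition denom (alpha beta a2 t : R) : R :=
  beta ^ 2 * exp (- (2 * mAB alpha beta / beta) * t) - 3 * a2 * mAB alpha beta.

(* q(t) with sign s (s = 1 or s = -1 encodes the +/-) *)
Definition qsol (alpha beta a2 s t : R) : R :=
  s * sqrt (radic alpha beta a2 t) / denom alpha beta a2 t.

Definition psol (alpha beta a2 s t : R) : R :=
  mAB alpha beta * qsol alpha beta a2 s t / beta
  + beta / 3 * (qsol alpha beta a2 s t) ^ 3.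

Definition I2 (alpha beta q p t : R) : R :=
  (p - mAB alpha beta * q / beta - beta / 3 * q ^ 3) * exp (3 * t / beta).

Definition is_open_interval (I : R -> Prop) : Prop :=
  (forall x y z, I x -> I z -> x <= y <= z -> I y) /\
  (forall t, I t -> exists eps, 0 < eps /\ forall s, Rabs (s - t) < eps -> I s).

(* On the zero level set of I_2 the momentum is the cubic p = (ab-3) q/b + (b/3) q^3, and for
   b^2 g + 3ab - 9 = 0 this curve is invariant under the flow, so the system reduces to the
   Bernoulli equation q' = -p(q).  Its solutions are exactly those along which
   (1/q^2 + b^2/(3(ab-3))) e^{-2(ab-3)t/b} stays constant; calling this constant a2 and solving
   for q gives the stated formula, the sign of q being fixed on an interval. *)
From Stdlib Require Import Reals Ranalysis5 Lra Classical.
From Coquelicot Require Import Coquelicot.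
Open Scope R_scope.

Definition expq (alpha beta t : R) : R := exp (- (2 * mAB alpha beta / beta) * t).

Definition I2_curve (alpha beta x : R) : R :=
  mAB alpha beta * x / beta + beta / 3 * x ^ 3.

(* The value of a2 read off from q(t) = x. *)
Definition a2_of (alpha beta x t : R) : R :=
  (/ x ^ 2 + beta ^ 2 / (3 * mAB alpha beta)) * expq alpha beta t.

Lemma expq_pos (alpha beta t : R) : 0 < expq alpha beta t.
Proof. apply exp_pos. Qed.

Lemma mAB_neq0 (alpha beta : R) : alpha * beta <> 3 -> mAB alpha beta <> 0.
Proof. unfold mAB; lra. Qed.

Lemma exp_4mAB (alpha beta t : R) : beta <> 0 ->
  exp (- (4 * mAB alpha beta / beta) * t) = expq alpha beta t ^ 2.
Proof. intros hb. unfold expq. simpl. rewrite Rmult_1_r, <- exp_plus. f_equal. field. exact hb. Qed.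

Lemma radic_factor (alpha beta a2 t : R) : beta <> 0 ->
  radic alpha beta a2 t = -3 * mAB alpha beta * expq alpha beta t * denom alpha beta a2 t.
Proof. intros hb. unfold radic, denom. rewrite exp_4mAB by exact hb. unfold expq. ring. Qed.

Lemma radic_neq0 (alpha beta a2 t : R) : beta <> 0 -> alpha * beta <> 3 ->
  denom alpha beta a2 t <> 0 -> radic alpha beta a2 t <> 0.
Proof.
intros hb hab hD. rewrite radic_factor by exact hb.
pose proof (mAB_neq0 _ _ hab). pose proof (expq_pos alpha beta t).
repeat apply Rmult_integral_contrapositive_currified; lra.
Qed.

Lemma qsol_sq (alpha beta a2 s t : R) : (s = 1 \/ s = -1) -> 0 <= radic alpha beta a2 t ->
  qsol alpha beta a2 s t ^ 2 = radic alpha beta a2 t / denom alpha beta a2 t ^ 2.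
Proof.
intros hs hR. unfold qsol, Rdiv.
rewrite !Rpow_mult_distr, pow2_sqrt, pow_inv by exact hR.
destruct hs as [-> | ->]; ring.
Qed.

Lemma is_derive_scaled_sqrt_div (r d : R -> R) (s t r' d' : R) :
  is_derive r t r' -> is_derive d t d' -> 0 < r t -> d t <> 0 ->
  is_derive (fun x => s * sqrt (r x) / d x) t
    (s * sqrt (r t) / d t * (r' / (2 * r t) - d' / d t)).
Proof.
intros hr hd hr0 hd0.
auto_derive.
- repeat split; auto; [exists r' | exists d']; assumption.
- replace (Derive (fun x => r x) t) with r' by (symmetry; apply is_derive_unique, hr).
  replace (Derive (fun x => d x) t) with d' by (symmetry; apply is_derive_unique, hd).
  assert (hS0 : 0 < sqrt (r t)) by (apply sqrt_lt_R0; lra).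
  assert (hS : r t = sqrt (r t) * sqrt (r t)) by (symmetry; apply sqrt_sqrt; lra).
  set (S := sqrt (r t)) in *. rewrite hS. field; lra.
Qed.

Lemma is_derive_radic (alpha beta a2 t : R) : beta <> 0 ->
  is_derive (radic alpha beta a2) t
    (- (2 * mAB alpha beta / beta) * (9 * a2 * mAB alpha beta ^ 2 * expq alpha beta t
       - 6 * beta ^ 2 * mAB alpha beta * expq alpha beta t ^ 2)).
Proof.
intros hb. unfold radic. auto_derive; [exact I|].
rewrite exp_4mAB by exact hb. unfold expq. field. exact hb.
Qed.

Lemma is_derive_denom (alpha beta a2 t : R) :
  is_derive (denom alpha beta a2) t
    (- (2 * mAB alpha beta / beta) * beta ^ 2 * expq alpha beta t).
Proof. unfold denom. auto_derive; [exact I|]. unfold expq. ring. Qed.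

Lemma is_derive_qsol (alpha beta a2 s t : R) : beta <> 0 -> alpha * beta <> 3 ->
  (s = 1 \/ s = -1) -> 0 <= radic alpha beta a2 t -> denom alpha beta a2 t <> 0 ->
  is_derive (qsol alpha beta a2 s) t (- psol alpha beta a2 s t).
Proof.
intros hb hab hs hR hD.
assert (hR0 : 0 < radic alpha beta a2 t)
  by (destruct hR as [|hR]; [assumption | symmetry in hR; now apply radic_neq0 in hR]).
replace (- psol alpha beta a2 s t) with
  (qsol alpha beta a2 s t * (- (2 * mAB alpha beta / beta) * (9 * a2 * mAB alpha beta ^ 2
     * expq alpha beta t - 6 * beta ^ 2 * mAB alpha beta * expq alpha beta t ^ 2)
     / (2 * radic alpha beta a2 t)
   - - (2 * mAB alpha beta / beta) * beta ^ 2 * expq alpha beta t / denom alpha beta a2 t)).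
{ apply (is_derive_scaled_sqrt_div (radic alpha beta a2) (denom alpha beta a2));
    auto using is_derive_radic, is_derive_denom. }
(* q'/q = R'/(2R) - D'/D, and with R = -3 m E D this equals -(m/b + (b/3) q^2). *)
unfold psol.
replace (qsol alpha beta a2 s t ^ 3) with
  (qsol alpha beta a2 s t * (radic alpha beta a2 t / denom alpha beta a2 t ^ 2))
  by (rewrite <- (qsol_sq alpha beta a2 s t) by assumption; ring).
rewrite radic_factor in * by exact hb.
pose proof (mAB_neq0 _ _ hab). pose proof (expq_pos alpha beta t).
unfold expq, denom in *. field. repeat split; auto; lra.
Qed.

Lemma is_derive_I2_curve (alpha beta x : R) : beta <> 0 ->
  is_derive (I2_curve alpha beta) x (mAB alpha beta / beta + beta * x ^ 2).
Proof. intros hb. unfold I2_curve. auto_derive; [exact I|]. field. exact hb. Qed.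

(* The relation between gamma and alpha, beta is exactly what makes p = I2_curve q invariant. *)
Lemma I2_curve_invariant (alpha beta gamma x : R) : beta <> 0 ->
  beta ^ 2 * gamma + 3 * alpha * beta - 9 = 0 ->
  (mAB alpha beta / beta + beta * x ^ 2) * - I2_curve alpha beta x
  = - gamma * x + x ^ 3 - (alpha + beta * x ^ 2) * I2_curve alpha beta x.
Proof.
intros hb hg.
replace gamma with ((9 - 3 * alpha * beta) / beta ^ 2).
- unfold I2_curve, mAB. field. exact hb.
- apply Rmult_eq_reg_l with (beta ^ 2); [|now apply pow_nonzero].
  field_simplify; [lra | exact hb].
Qed.

Lemma qsol_psol_solve (alpha beta gamma a2 s t : R) :
  beta <> 0 -> alpha * beta <> 3 -> beta ^ 2 * gamma + 3 * alpha * beta - 9 = 0 ->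
  (s = 1 \/ s = -1) -> 0 <= radic alpha beta a2 t -> denom alpha beta a2 t <> 0 ->
  derivable_pt_lim (qsol alpha beta a2 s) t (- psol alpha beta a2 s t) /\
  derivable_pt_lim (psol alpha beta a2 s) t
    (- gamma * qsol alpha beta a2 s t + qsol alpha beta a2 s t ^ 3
     - (alpha + beta * qsol alpha beta a2 s t ^ 2) * psol alpha beta a2 s t).
Proof.
intros hb hab hg hs hR hD.
pose proof (is_derive_qsol _ _ _ _ _ hb hab hs hR hD) as hq.
split; [now apply is_derive_Reals|].
replace (- gamma * _ + _ - _) with
  ((mAB alpha beta / beta + beta * qsol alpha beta a2 s t ^ 2) * - psol alpha beta a2 s t)
  by (apply I2_curve_invariant; assumption).
apply (derivable_pt_lim_comp (qsol alpha beta a2 s) (I2_curve alpha beta));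
  apply is_derive_Reals; [exact hq | now apply is_derive_I2_curve].
Qed.

Lemma I2_eq0_curve (alpha beta q p t : R) :
  I2 alpha beta q p t = 0 -> p = I2_curve alpha beta q.
Proof.
unfold I2, I2_curve. intros hI.
apply Rmult_integral in hI as [hI | hI]; [lra|].
pose proof (exp_pos (3 * t / beta)); lra.
Qed.

Lemma derive0_const_on_interval (J : R -> Prop) (g : R -> R) (t0 t : R) :
  is_open_interval J -> (forall x, J x -> derivable_pt_lim g x 0) ->
  J t0 -> J t -> g t = g t0.
Proof.
intros [hJ _] hg h0 ht.
destruct (Rtotal_order t0 t) as [lt | [-> | gt]]; [| reflexivity |].
- destruct (MVT_cor2 g (fun _ => 0) t0 t lt) as [c [hc _]]; [|lra].
  intros c hc. apply hg, (hJ t0 c t); auto.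
- destruct (MVT_cor2 g (fun _ => 0) t t0 gt) as [c [hc _]]; [|lra].
  intros c hc. apply hg, (hJ t c t0); auto.
Qed.

Lemma neg_on_interval (J : R -> Prop) (f : R -> R) (t0 t : R) :
  is_open_interval J -> (forall x, J x -> continuity_pt f x) ->
  (forall x, J x -> f x <> 0) -> J t0 -> J t -> f t0 < 0 -> f t < 0.
Proof.
intros [hJ _] hc hn h0 ht hf0.
destruct (Rlt_or_le (f t) 0) as [| hle]; [assumption | exfalso].
assert (hpos : 0 < f t) by (destruct hle; [assumption | exfalso; apply (hn t ht); lra]).
destruct (Rtotal_order t0 t) as [lt | [-> | gt]]; [| lra |].
- destruct (IVT_interv f t0 t) as [z [hz hfz]]; auto.
  + intros a ha. apply hc, (hJ t0 a t); auto.
  + apply (hn z); auto. apply (hJ t0 z t); auto.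
- destruct (IVT_interv (fun x => - f x) t t0) as [z [hz hfz]]; auto; try lra.
  + intros a ha. apply continuity_pt_opp, hc, (hJ t a t0); auto.
  + apply (hn z); [apply (hJ t z t0); auto | lra].
Qed.

Lemma is_derive_a2_of (alpha beta : R) (q : R -> R) (p t : R) :
  beta <> 0 -> alpha * beta <> 3 ->
  is_derive q t (- p) -> q t <> 0 -> p = I2_curve alpha beta (q t) ->
  is_derive (fun x => a2_of alpha beta (q x) x) t 0.
Proof.
intros hb hab hq hq0 hp. pose proof (mAB_neq0 _ _ hab).
unfold a2_of, expq. auto_derive.
- repeat split; auto. exists (- p). exact hq.
- replace (Derive (fun x => q x) t) with (- p) by (symmetry; apply is_derive_unique, hq).
  rewrite hp. unfold I2_curve. field. auto.
Qed.

(* The sign s must be that of -(ab-3) q, since qsol has the sign of s times that of denom. *)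
Lemma qsol_a2_of (alpha beta s x t : R) : beta <> 0 -> alpha * beta <> 3 ->
  (s = 1 \/ s = -1) -> x <> 0 -> s * mAB alpha beta * x < 0 ->
  0 <= radic alpha beta (a2_of alpha beta x t) t /\
  denom alpha beta (a2_of alpha beta x t) t <> 0 /\
  x = qsol alpha beta (a2_of alpha beta x t) s t.
Proof.
intros hb hab hs hx hsx.
pose proof (mAB_neq0 _ _ hab) as hm.
pose proof (expq_pos alpha beta t) as hE.
assert (hD : denom alpha beta (a2_of alpha beta x t) t
             = -3 * mAB alpha beta * expq alpha beta t / x ^ 2).
{ unfold denom, a2_of, expq. field. auto. }
assert (hR : radic alpha beta (a2_of alpha beta x t) t
             = (3 * s * mAB alpha beta * expq alpha beta t / x) ^ 2).
{ rewrite radic_factor, hD by exact hb. destruct hs as [-> | ->]; field; exact hx. }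
set (E := expq alpha beta t) in *. set (m := mAB alpha beta) in *.
assert (hx2 : 0 < x ^ 2) by (apply pow2_gt_0; exact hx).
assert (hsqrt : 0 <= - (3 * s * m * E / x)).
{ replace (- (3 * s * m * E / x)) with (-3 * E * (s * m * x) / x ^ 2) by (field; exact hx).
  apply Rmult_le_pos; [nra | left; apply Rinv_0_lt_compat, hx2]. }
split; [rewrite hR; apply pow2_ge_0|]. split.
- rewrite hD. unfold Rdiv. apply Rmult_integral_contrapositive_currified;
    [nra | apply Rinv_neq_0_compat; lra].
- unfold qsol. rewrite hR, hD.
  replace ((3 * s * m * E / x) ^ 2) with ((- (3 * s * m * E / x)) ^ 2) by ring.
  rewrite sqrt_pow2 by exact hsqrt.
  destruct hs as [-> | ->]; field; repeat split; auto; lra.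
Qed.

Lemma I2_zero_solution_eq_qsol (alpha beta : R) (J : R -> Prop) (q p : R -> R) :
  beta <> 0 -> alpha * beta <> 3 -> is_open_interval J ->
  (forall t, J t -> derivable_pt_lim q t (- p t)) ->
  (forall t, J t -> q t <> 0) ->
  (forall t, J t -> I2 alpha beta (q t) (p t) t = 0) ->
  exists a2 s, (s = 1 \/ s = -1) /\
    forall t, J t ->
      0 <= radic alpha beta a2 t /\ denom alpha beta a2 t <> 0 /\
      q t = qsol alpha beta a2 s t /\ p t = psol alpha beta a2 s t.
Proof.
intros hb hab hJ hq hq0 hI.
pose proof (mAB_neq0 _ _ hab) as hm.
assert (hp : forall t, J t -> p t = I2_curve alpha beta (q t))
  by (intros t ht; exact (I2_eq0_curve _ _ _ _ _ (hI t ht))).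
destruct (classic (exists t0, J t0)) as [[t0 ht0] | hempty].
2: { exists 0, 1. split; [now left|]. intros t ht. exfalso. eauto. }
set (s := if Rlt_dec 0 (- mAB alpha beta * q t0) then 1 else -1).
assert (hs : s = 1 \/ s = -1) by (unfold s; destruct Rlt_dec; auto).
assert (hs0 : s * mAB alpha beta * q t0 < 0).
{ pose proof (Rmult_integral_contrapositive_currified _ _ hm (hq0 t0 ht0)).
  unfold s. destruct Rlt_dec; lra. }
assert (hsign : forall t, J t -> s * mAB alpha beta * q t < 0).
{ intros t ht. apply (neg_on_interval J (fun x => s * mAB alpha beta * q x) t0 t); auto.
  - intros x hx. apply continuity_pt_mult; [apply continuity_pt_const; now intros ? ?|].
    apply derivable_continuous_pt. exists (- p x). now apply hq.
  - intros x hx. repeat apply Rmult_integral_contrapositive_currified; auto.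
    destruct hs as [-> | ->]; lra. }
assert (ha2 : forall t, J t -> a2_of alpha beta (q t) t = a2_of alpha beta (q t0) t0).
{ intros t ht. apply (derive0_const_on_interval J (fun x => a2_of alpha beta (q x) x));
    auto.
  intros x hx. apply is_derive_Reals, (is_derive_a2_of _ _ _ (p x)); auto.
  now apply is_derive_Reals, hq. }
exists (a2_of alpha beta (q t0) t0), s. split; [exact hs|]. intros t ht.
rewrite <- (ha2 t ht).
destruct (qsol_a2_of alpha beta s (q t) t) as (hR & hD & hqt); auto.
repeat split; auto.
rewrite (hp t ht). unfold psol. rewrite <- hqt. reflexivity.
Qed.

Theorem mainTheorem6 (alpha beta gamma : R)
  (hb : beta <> 0) (hab : alpha * beta <> 3)
  (hg : beta ^ 2 * gamma + 3 * alpha * beta - 9 = 0) :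
  (forall (a2 s : R), (s = 1 \/ s = -1) ->
     forall t : R,
       0 <= radic alpha beta a2 t -> denom alpha beta a2 t <> 0 ->
       derivable_pt_lim (qsol alpha beta a2 s) t (- psol alpha beta a2 s t) /\
       derivable_pt_lim (psol alpha beta a2 s) t
         (- gamma * qsol alpha beta a2 s t + (qsol alpha beta a2 s t) ^ 3
          - (alpha + beta * (qsol alpha beta a2 s t) ^ 2) * psol alpha beta a2 s t))
  /\
  (forall (J : R -> Prop) (q p : R -> R),
     is_open_interval J ->
     (forall t, J t -> derivable_pt_lim q t (- p t)) ->
     (forall t, J t -> derivable_pt_lim p t
                         (- gamma * q t + (q t) ^ 3 - (alpha + beta * (q t) ^ 2) * p t)) ->
     (forall t, J t -> q t <> 0) ->
     (forall t, J t -> I2 alpha beta (q t) (p t) t = 0) ->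
     exists a2 s, (s = 1 \/ s = -1) /\
       forall t, J t ->
         0 <= radic alpha beta a2 t /\ denom alpha beta a2 t <> 0 /\
         q t = qsol alpha beta a2 s t /\ p t = psol alpha beta a2 s t).
Proof.
split.
- intros a2 s hs t hR hD. now apply qsol_psol_solve.
- (* On I_2 = 0 the momentum is a function of q. *)
  intros J q p hJ hq _ hq0 hI. now apply I2_zero_solution_eq_qsol.
Qed.
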